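(* Let $G=(V,E)$ be a connected graph and $\ell$ an $s$-cyclic labeling of $G$ (for some integer $s\ge 3$). Then either $G$ is acyclic or $G$ contains a unique cycle, whose length $k$ is divisible by $s$. Further, if $G$ contains a cycle $C$, then $C$ is an oriented (directed) cycle in the orientation induced by $\ell$, and all oriented paths in $G$ are oriented away from the vertices of $C$.
   Context: For $L=\{0,1,\dots,s-1\}$ with $s\ge 3$, a function $\ell:V\to L$ is an $s$-cyclic labeling of $G$ if every $v\in V$ has at most one neighbor $P(v)$ (the parent of $v$) with $\ell(P(v))\equiv \ell(v)-1 \pmod s$, and all other neighbors $w$ of $v$ satisfy $\ell(w)\equiv\ell(v)+1\pmod s$. The orientation induced by $\ell$ orients each edge $\{u,v\}$ as $(u,v)$ when $u=P(v)$, i.e. away from the parent. *)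

From mathcomp Require Import all_boot.
Set Implicit Arguments. Unset Strict Implicit. Unset Printing Implicit Defensive.

Definition simple_graph (V : finType) (e : rel V) : Prop :=
  symmetric e /\ irreflexive e.

Definition connected_graph (V : finType) (e : rel V) : Prop :=
  forall x y : V, connect e x y.

(* s-cyclic labeling with labels L = {0,...,s-1} = 'I_s:
   at most one neighbour w of v has l w = l v - 1 (mod s), i.e. l w + 1 = l v
   (mod s); every neighbour w of v has l w = l v - 1 or l w = l v + 1 (mod s). *)
Definition is_parent_of (V : finType) (e : rel V) (s : nat) (l : V -> 'I_s)
  (u v : V) : bool :=
  e v u && ((l u).+1 == l v %[mod s]).

Definition cyclic_labeling (V : finType) (e : rel V) (s : nat)
  (l : V -> 'I_s) : Prop :=
  forall v : V,
    #|[pred w | is_parent_of e l w v]| <= 1 /\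
    (forall w, e v w -> ~~ is_parent_of e l w v ->
       (l w : nat) == (l v).+1 %[mod s]).

Definition induced_arc (V : finType) (e : rel V) (s : nat) (l : V -> 'I_s) : rel V :=
  fun u v => is_parent_of e l u v.

Definition graph_cycle (V : finType) (e : rel V) (c : seq V) : bool :=
  [&& 2 < size c, uniq c & cycle e c].

Definition cycle_edge (V : finType) (c : seq V) (x y : V) : bool :=
  (x \in c) && (y \in c) && ((y == next c x) || (x == next c y)).

Definition same_cycle (V : finType) (c1 c2 : seq V) : Prop :=
  forall x y, cycle_edge c1 x y = cycle_edge c2 x y.

Definition oriented_cycle (V : finType) (a : rel V) (c : seq V) : Prop :=
  cycle a c \/ cycle a (rev c).

From mathcomp Require Import all_boot.
From Stdlib Require Import Classical.
Set Implicit Arguments. Unset Strict Implicit. Unset Printing Implicit Defensive.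

(* Every edge is oriented from its parent end, and each vertex has at most one
   parent, i.e. in-degree at most 1.  Along a cycle, two consecutive edges
   pointing towards each other would give their common vertex two parents, so
   every cycle is a directed cycle; since labels increase by 1 along arcs, its
   length is a multiple of s.  The parent of a cycle vertex is its predecessor
   on the cycle, so oriented paths never enter a cycle from outside, while
   walking any path from a cycle vertex (forwards along arcs, or backwards to
   the unique parent) shows that every vertex is reachable from the cycle by an
   oriented path.  Hence a second cycle must contain a vertex of the first one,
   and then, following parents backwards, lies inside it; having the same
   vertices and both being directed, the two cycles have the same edges. *)

Section NextCycle.
Variable T : finType.
Implicit Types (c : seq T) (x y : T).

Lemma iter_next_onto c x y : uniq c -> x \in c -> y \in c ->
  exists k, y = iter k (next c) x.
Proof.
move=> Uc xc yc; have [i q rot_c] := rot_to xc.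
have cyc_q : fcycle (next c) (x :: q) by rewrite -rot_c rot_cycle cycle_next.
have : y \in x :: q by rewrite -rot_c mem_rot.
by rewrite (fcycle_consE cyc_q) => /trajectP[k _ ->]; exists k.
Qed.

Lemma next_invariant c (P : pred T) x : uniq c -> x \in c -> P x ->
  (forall z, z \in c -> P z -> P (next c z)) -> {in c, forall y, P y}.
Proof.
move=> Uc xc Px PnextP y yc; have [k ->] := iter_next_onto Uc xc yc.
suff /andP[] : (iter k (next c) x \in c) && P (iter k (next c) x) by [].
elim: k => [|k /andP[IHc IHP]] /=; first by rewrite xc Px.
by rewrite mem_next IHc PnextP.
Qed.

Lemma next_next_neq c x : uniq c -> 2 < size c -> x \in c ->
  next c (next c x) != x.
Proof.
move=> Uc size_c xc; have [i q rot_c] := rot_to xc.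
have cyc_q : fcycle (next c) (x :: q) by rewrite -rot_c rot_cycle cycle_next.
have : uniq (x :: q) by rewrite -rot_c rot_uniq.
rewrite (fcycle_consE cyc_q).
have -> : size q = (size q).-2.+2.
  by move: size_c; rewrite -(size_rot i) rot_c /=; case: (size q) => [|[]].
by rewrite /= !inE => /andP[/norP[_ /norP[]]]; rewrite eq_sym.
Qed.

End NextCycle.

Section CyclicLabeling.
Variables (V : finType) (e : rel V) (s : nat) (l : V -> 'I_s).
Hypotheses (sym_e : symmetric e) (lab_l : cyclic_labeling e l).
Local Notation a := (induced_arc e l).

Lemma edge_arc u v : e u v -> a u v || a v u.
Proof.
move=> euv; case auv: (a u v) => //=; have [_ /(_ u)] := lab_l v.
rewrite sym_e euv; move: auv; rewrite /induced_arc => -> /(_ isT isT) luv.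
by rewrite /is_parent_of euv eq_sym.
Qed.

Lemma arc_parent_uniq u w v : a u v -> a w v -> u = w.
Proof. by have [/card_le1_eqP parent1 _] := lab_l v; move=> auv awv; apply: parent1. Qed.

Lemma arc_path_label x p : path a x p -> l (last x p) = l x + size p %[mod s].
Proof.
elim: p x => [|y p IHp] x /=; first by rewrite addn0.
case/andP=> /andP[_ /eqP lxy] /IHp ->.
by rewrite -modnDml -lxy modnDml addSnnS.
Qed.

Lemma arc_cycle_size_dvd o : cycle a o -> s %| size o.
Proof.
case: o => [|x q] //= /arc_path_label; rewrite last_rcons size_rcons.
by rewrite -{1}(addn0 (l x)) => /eqP; rewrite eqn_modDl mod0n eq_sym.
Qed.

Lemma graph_cycle_oriented c : graph_cycle e c -> oriented_cycle a c.
Proof.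
case/and3P=> size_c Uc cyc_c.
have e_next x : x \in c -> e x (next c x) by apply: next_cycle.
have [/hasP[x xc axn]|/hasPn no_fwd] := boolP (has (fun x => a x (next c x)) c).
- left; apply: (cycle_from_next Uc).
  apply: (next_invariant (P := fun z => a z (next c z)) Uc xc axn) => z zc azn.
  have nzc : next c z \in c by rewrite mem_next.
  case/orP: (edge_arc (e_next _ nzc)) => // a_back.
  by move: (next_next_neq Uc size_c zc); rewrite -(arc_parent_uniq azn a_back) eqxx.
- right; apply: cycle_from_next; first by rewrite rev_uniq.
  move=> z; rewrite mem_rev (next_rev Uc) => zc.
  have pc : prev c z \in c by rewrite mem_prev.
  move: (e_next _ pc) (no_fwd _ pc); rewrite (next_prev Uc).
  by case/edge_arc/orP => ->.
Qed.

Lemma graph_cycle_directed c : graph_cycle e c ->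
  exists o, [/\ cycle a o, uniq o, c =i o & size o = size c].
Proof.
move=> Gc; have Uc : uniq c by case/and3P: Gc.
case: (graph_cycle_oriented Gc) => cyc_o; first by exists c.
exists (rev c); split => //; [by rewrite rev_uniq | by move=> x; rewrite mem_rev | exact: size_rev].
Qed.

Lemma parent_mem_cycle c x u : graph_cycle e c -> x \in c -> a u x -> u \in c.
Proof.
move=> Gc xc aux; have [o [cyc_o _ co _]] := graph_cycle_directed Gc.
have xo : x \in o by rewrite -co.
by rewrite co (arc_parent_uniq aux (prev_cycle cyc_o xo)) mem_prev.
Qed.

Lemma arc_path_into_cycle c x p : graph_cycle e c -> path a x p ->
  last x p \in c -> all (mem c) (x :: p).
Proof.
move=> Gc; elim: p x => [|y p IHp] x /=; first by rewrite andbT.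
case/andP=> axy /IHp{}IHp /IHp /= /andP[yc ->].
by rewrite yc (parent_mem_cycle Gc yc axy).
Qed.

Definition reachable_from (c : seq V) v :=
  exists u p, [/\ u \in c, path a u p & last u p = v].

Lemma reachable_from_arc c w z : reachable_from c w -> a w z -> reachable_from c z.
Proof.
case=> u [p [uc pth <-]] awz; exists u, (rcons p z).
by rewrite rcons_path pth awz last_rcons.
Qed.

Lemma reachable_from_parent c w z : graph_cycle e c ->
  reachable_from c w -> a z w -> reachable_from c z.
Proof.
move=> Gc [u [p [uc]]]; case/lastP: p => [|p y] /=.
  by move=> _ <- azu; exists z, [::]; rewrite (parent_mem_cycle Gc uc azu).
rewrite rcons_path last_rcons => /andP[pth ay] <- az.
by exists u, p; rewrite (arc_parent_uniq az ay).
Qed.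

Lemma reachable_from_cycle c v : graph_cycle e c -> connected_graph e ->
  reachable_from c v.
Proof.
move=> Gc conn_e; have [x0 x0c] : exists x0, x0 \in c.
  by case: c Gc => [/and3P[]|x0 c _] //; exists x0; rewrite mem_head.
have [p pth ->] := connectP (conn_e x0 v).
have : reachable_from c x0 by exists x0, [::].
elim: p x0 {x0c} pth => [|y p IHp] x //= /andP[exy pth] rx.
apply: IHp pth _; case/orP: (edge_arc exy).
- exact: reachable_from_arc.
- exact: reachable_from_parent.
Qed.

Lemma arc_into_cycle_edge c u v : graph_cycle e c -> a u v -> v \in c ->
  (v == next c u) || (u == next c v).
Proof.
move=> Gc auv vc; have /and3P[_ Uc _] := Gc.
case: (graph_cycle_oriented Gc) => cyc_o.
  by rewrite (arc_parent_uniq auv (prev_cycle cyc_o vc)) next_prev ?eqxx.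
move: vc; rewrite -mem_rev => /(prev_cycle cyc_o); rewrite (prev_rev Uc).
by move/(arc_parent_uniq auv) ->; rewrite eqxx orbT.
Qed.

Lemma cycle_edgeE c x y : graph_cycle e c ->
  cycle_edge c x y = [&& x \in c, y \in c & a x y || a y x].
Proof.
move=> Gc; have /and3P[_ _ cyc_c] := Gc; rewrite /cycle_edge -andbA.
have [xc|//] := boolP (x \in c); have [yc|//] := boolP (y \in c) => /=.
apply/idP/idP => [/orP[]/eqP->|/orP[]/(arc_into_cycle_edge Gc)].
- exact/edge_arc/next_cycle.
- by rewrite orbC; apply/edge_arc/next_cycle.
- by apply.
- by rewrite orbC; apply.
Qed.

Lemma graph_cycle_sub c c' : connected_graph e ->
  graph_cycle e c -> graph_cycle e c' -> {subset c' <= c}.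
Proof.
move=> conn_e Gc Gc'; have [o' [cyc_o' Uo' co' _]] := graph_cycle_directed Gc'.
have [u uc uc'] : exists2 u, u \in c & u \in c'.
  case: c' Gc' {co'} => [|v c'] Gc'; first by case/and3P: Gc'.
  have [u [p [uc pth lst]]] := reachable_from_cycle v Gc conn_e.
  move: (arc_path_into_cycle Gc' pth); rewrite lst mem_head => /(_ isT) /andP[].
  by exists u.
have Ur : uniq (rev o') by rewrite rev_uniq.
move=> y; rewrite co' -mem_rev.
apply: (next_invariant (P := mem c) Ur _ uc); first by rewrite mem_rev -co'.
move=> z; rewrite mem_rev (next_rev Uo') => zo zc.
exact: parent_mem_cycle Gc zc (prev_cycle cyc_o' zo).
Qed.

Lemma graph_cycle_same c c' : connected_graph e ->
  graph_cycle e c -> graph_cycle e c' -> same_cycle c c'.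
Proof.
move=> conn_e Gc Gc' x y; rewrite !cycle_edgeE //.
have mem_cc' z : (z \in c) = (z \in c').
  by apply/idP/idP; apply: graph_cycle_sub.
by rewrite !mem_cc'.
Qed.

End CyclicLabeling.

Theorem lemma1 (V : finType) (e : rel V) (s : nat) (l : V -> 'I_s) :
  simple_graph e -> connected_graph e -> 3 <= s -> cyclic_labeling e l ->
  ((forall c : seq V, ~~ graph_cycle e c) \/
   (exists c : seq V, [/\ graph_cycle e c, s %| size c &
      forall c' : seq V, graph_cycle e c' -> same_cycle c c'])) /\
  (forall c : seq V, graph_cycle e c ->
     [/\ oriented_cycle (induced_arc e l) c,
         (* every vertex is reached by an oriented path leaving C *)
         forall v : V, exists (u : V) (p : seq V),
           [/\ u \in c, path (induced_arc e l) u p & last u p = v] &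
         (* no oriented path enters C from outside C *)
         forall (x : V) (p : seq V), path (induced_arc e l) x p ->
           last x p \in c -> all (mem c) (x :: p)]).
Proof.
move=> [sym_e _] conn_e _ lab_l; split.
- have [[c Gc]|no_cycle] := classic (exists c, graph_cycle e c); last first.
    by left=> c; apply/negP=> Gc; apply: no_cycle; exists c.
  right; exists c; split=> //.
    have [o [cyc_o _ _ <-]] := graph_cycle_directed sym_e lab_l Gc.
    exact: arc_cycle_size_dvd cyc_o.
  by move=> c'; apply: graph_cycle_same.
- move=> c Gc; split.
  + exact: graph_cycle_oriented.
  + by move=> v; apply: reachable_from_cycle.
  + by move=> x p; apply: arc_path_into_cycle.
Qed.
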